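(* Let $X$ be a fake weighted projective space with weights $(\lambda_0,\ldots,\lambda_n)$. If $X$ is Gorenstein, then $\mathbb{P}(\lambda_0,\ldots,\lambda_n)$ is Gorenstein.
   Context: Let $N\cong\mathbb{Z}^n$ be a lattice and $N_\mathbb{R}:=N\otimes_\mathbb{Z}\mathbb{R}$. Let $\rho_0,\ldots,\rho_n\in N$ be primitive lattice points with $N_\mathbb{R}=\sum_{i=0}^n\mathbb{R}_{\geq0}\rho_i$. There are positive integers $\lambda_0,\ldots,\lambda_n$ with $\gcd\{\lambda_0,\ldots,\lambda_n\}=1$, unique up to order, such that $\sum_{i=0}^n\lambda_i\rho_i=0$. The cones $\sigma_i$ generated by $\{\rho_j: j\neq i\}$, $i=0,\ldots,n$, generate a complete simplicial fan; the associated projective toric variety $X$ is called a fake weighted projective space with weights $(\lambda_0,\ldots,\lambda_n)$. $\mathbb{P}(\lambda_0,\ldots,\lambda_n)$ denotes the usual weighted projective space with these weights. *)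

From HB Require Import structures.
From mathcomp Require Import all_boot all_order all_algebra.
Set Implicit Arguments. Unset Strict Implicit. Unset Printing Implicit Defensive.
Import Order.TTheory GRing.Theory Num.Theory.
Local Open Scope ring_scope.

(* The lattice N = Z^n is 'rV[int]_n; its dual M = Hom(N,Z) is also
   'rV[int]_n, with the standard pairing. *)
Definition pairing (n : nat) (m v : 'rV[int]_n) : int := \sum_(k < n) m 0 k * v 0 k.

Definition primitive (n : nat) (v : 'rV[int]_n) : Prop :=
  forall (k : int) (w : 'rV[int]_n), v = k *: w -> `|k| = 1.

Definition to_rat_vec (n : nat) (v : 'rV[int]_n) : 'rV[rat]_n :=
  map_mx (fun z : int => z%:~R) v.

(* N_R = sum_i R_{>=0} rho_i  (checked on rational points, which is
   equivalent for rational cones). *)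
Definition positively_spanning (n : nat) (rho : 'I_n.+1 -> 'rV[int]_n) : Prop :=
  forall v : 'rV[rat]_n, exists c : 'I_n.+1 -> rat,
    (forall i, 0 <= c i) /\ v = \sum_(i < n.+1) c i *: to_rat_vec (rho i).

Definition fake_wps_data (n : nat) (rho : 'I_n.+1 -> 'rV[int]_n)
    (lambda : 'I_n.+1 -> nat) : Prop :=
  [/\ forall i, primitive (rho i),
      positively_spanning rho,
      forall i, (0 < lambda i)%N,
      \big[gcdn/0%N]_(i < n.+1) lambda i = 1%N
    & \sum_(i < n.+1) (lambda i)%:Z *: rho i = 0].

(* Gorenstein: K_X is Cartier, i.e. for every maximal cone sigma_i (generated by
   the rho_j, j <> i) there is m_i in M with <m_i, rho_j> = 1 for all j <> i. *)
Definition fake_wps_gorenstein (n : nat) (rho : 'I_n.+1 -> 'rV[int]_n) : Prop :=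
  forall i : 'I_n.+1, exists m : 'rV[int]_n,
    forall j : 'I_n.+1, j != i -> pairing m (rho j) = 1.

(* Weighted projective space P(lambda): lattice N' = Z^{n+1} / Z lambda, rays the
   images of the standard basis vectors e_j.  Its dual lattice is
   M' = { m in Z^{n+1} | sum_j m_j lambda_j = 0 }, and <m, image of e_j> = m_j. *)
Definition wps_gorenstein (n : nat) (lambda : 'I_n.+1 -> nat) : Prop :=
  forall i : 'I_n.+1, exists m : 'I_n.+1 -> int,
    \sum_(j < n.+1) m j * (lambda j)%:Z = 0 /\
    forall j : 'I_n.+1, j != i -> m j = 1.

From HB Require Import structures.
From mathcomp Require Import all_boot all_order all_algebra.
Import GRing.Theory.
Local Open Scope ring_scope.

(* Pairing the relation [sum_j lambda_j rho_j = 0] with the Gorenstein form [m_i]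
   of the cone [sigma_i] shows that the vector [(<m_i, rho_j>)_j] lies in the dual
   lattice [M'] of [P(lambda)]; its entries are [1] for [j <> i], so it is a
   Gorenstein form for the corresponding cone of [P(lambda)]. *)

Lemma pairing_sumr (n : nat) (I : finType) (m : 'rV[int]_n) (c : I -> int)
    (v : I -> 'rV[int]_n) :
  pairing m (\sum_i c i *: v i) = \sum_i c i * pairing m (v i).
Proof.
rewrite /pairing; under eq_bigr => k _ do rewrite summxE mulr_sumr.
rewrite exchange_big; apply: eq_bigr => i _; rewrite mulr_sumr.
by apply: eq_bigr => k _; rewrite mxE mulrCA.
Qed.

Lemma pairing_relation (n : nat) (I : finType) (m : 'rV[int]_n) (c : I -> int)
    (v : I -> 'rV[int]_n) :
  \sum_i c i *: v i = 0 -> \sum_i c i * pairing m (v i) = 0.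
Proof.
move=> rel; rewrite -pairing_sumr rel /pairing.
by apply: big1 => k _; rewrite mxE mulr0.
Qed.

Theorem mainTheorem4 (n : nat) (rho : 'I_n.+1 -> 'rV[int]_n)
    (lambda : 'I_n.+1 -> nat) :
  fake_wps_data rho lambda ->
  fake_wps_gorenstein rho ->
  wps_gorenstein lambda.
Proof.
case=> _ _ _ _ rel gor i; have [m m_gor] := gor i.
exists (fun j => pairing m (rho j)); split; last exact: m_gor.
rewrite -[RHS](@pairing_relation _ _ m _ _ rel).
by apply: eq_bigr => j _; rewrite mulrC.
Qed.
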